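(* Let $\gamma:[0,1]\to\mathbb{R}^2$ be a $C^1$ curve with constant speed $c>0$ (i.e. $\|\gamma'(s)\|=c$ for all $s$), and let $\theta:[0,1]\to\mathbb{R}$ be a turning angle function for $\gamma$. If $\theta(1)-\theta(0)=2\pi m$ with $m\in\mathbb{Z}$, $m\neq 0$, then there exist cuts $0\le c_1\le c_2\le 1$ such that the rearranged curve $r_{(c_1,c_2)}$ is a closed $C^1$ curve, i.e. $r_{(c_1,c_2)}(0)=r_{(c_1,c_2)}(1)$ and $r_{(c_1,c_2)}'(0)=r_{(c_1,c_2)}'(1)$.
   Context: A turning angle function for $\gamma$ is a continuous function $\theta$ with $\gamma'(s)=c(\cos\theta(s),\sin\theta(s))$. Concatenation: if $\alpha$ on $[a_1,b_1]$ and $\beta$ on $[a_2,b_2]$ are $C^1$ planar curves with the same constant speed, $\alpha*\beta$ is the curve on $[0,(b_1-a_1)+(b_2-a_2)]$ that equals $\alpha(s+a_1)$ for $s\le b_1-a_1$ and equals $T(\beta(s-(b_1-a_1)+a_2))$ afterwards, where $T$ is the orientation-preserving rigid motion of $\mathbb{R}^2$ sending $\beta(a_2)$ to $\alpha(b_1)$ and the unit tangent $\beta'(a_2)/c$ to $\alpha'(b_1)/c$ (so $T$ also sends the rotated-by-$\pi/2$ normal to the corresponding normal). This operation is associative. For cuts $0\le c_1\le c_2\le 1$, let $\gamma_1,\gamma_2,\gamma_3$ be the restrictions of $\gamma$ to $[0,c_1]$, $[c_1,c_2]$, $[c_2,1]$ respectively (an arc of length zero is a point that still carries the tangent direction of $\gamma$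 at that parameter). The rearranged curve is $r_{(c_1,c_2)}:=\gamma_1*\gamma_3*\gamma_2:[0,1]\to\mathbb{R}^2$. *)

From Stdlib Require Import Reals.
Open Scope R_scope.

Definition pt2 := (R * R)%type.

Definition I01 (t : R) : Prop := 0 <= t <= 1.

Definition deriv_on01 (f df : R -> pt2) : Prop :=
  forall s, I01 s ->
    D_in (fun t => fst (f t)) (fun t => fst (df t)) I01 s /\
    D_in (fun t => snd (f t)) (fun t => snd (df t)) I01 s.

Definition cont_on01 (f : R -> R) : Prop :=
  forall s, I01 s -> continue_in f I01 s.

Definition cont2_on01 (f : R -> pt2) : Prop :=
  cont_on01 (fun t => fst (f t)) /\ cont_on01 (fun t => snd (f t)).

Definition norm2 (p : pt2) : R := sqrt (fst p * fst p + snd p * snd p).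

Record piece := Piece { pos : R -> pt2; tang : R -> pt2; lo : R; hi : R }.

Definition vadd (p q : pt2) : pt2 := (fst p + fst q, snd p + snd q).
Definition vsub (p q : pt2) : pt2 := (fst p - fst q, snd p - snd q).
Definition vscale (k : R) (p : pt2) : pt2 := (k * fst p, k * snd p).

(* The rotation sending the unit vector u to the unit vector w:
   cos = u.w, sin = u x w. *)
Definition rot (u w p : pt2) : pt2 :=
  let co := fst u * fst w + snd u * snd w in
  let si := fst u * snd w - snd u * fst w in
  (co * fst p - si * snd p, si * fst p + co * snd p).

(* Concatenation alpha * beta of two pieces of the same constant speed c:
   T is the orientation-preserving rigid motion sending beta(a2) to alpha(b1)
   and the unit tangent beta'(a2)/c to alpha'(b1)/c. *)
Definition concat (c : R) (A B : piece) : piece :=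
  let LA := hi A - lo A in
  let LB := hi B - lo B in
  let u := vscale (/ c) (tang B (lo B)) in
  let w := vscale (/ c) (tang A (hi A)) in
  let T := fun p => vadd (pos A (hi A)) (rot u w (vsub p (pos B (lo B)))) in
  Piece
    (fun s => if Rle_dec s LA then pos A (s + lo A)
              else T (pos B (s - LA + lo B)))
    (fun s => if Rle_dec s LA then tang A (s + lo A)
              else rot u w (tang B (s - LA + lo B)))
    0 (LA + LB).

(* The rearranged curve r_(c1,c2) = gamma_1 * gamma_3 * gamma_2 (associativity:
   computed as (gamma_1 * gamma_3) * gamma_2). *)
Definition rearranged (c : R) (gam dgam : R -> pt2) (c1 c2 : R) : R -> pt2 :=
  let g1 := Piece gam dgam 0 c1 in
  let g2 := Piece gam dgam c1 c2 in
  let g3 := Piece gam dgam c2 1 in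
  pos (concat c (concat c g1 g3) g2).

(* Cutting at [c1 <= c2] and reassembling as [gamma_1 * gamma_3 * gamma_2]
   always matches the tangents at the two ends, because the turning angle of the
   rearranged curve runs from [theta 0] to [theta 1], which differ by [2 PI m].  Its end
   point is [gam 0] exactly when an explicit vector [rearranged_end c1 c2 - gam 0]
   vanishes.  Restricted to the cuts [(x y, y)] of the unit square and rotated by
   [theta y - theta 1], this vector is constant on three sides of the square and equals
   [gam 1 - gam 0] rotated by [theta y - theta 1] on the side [x = 1], so it winds [m]
   times around the boundary.  If it never vanished, summing the small angles between
   its values at neighbouring points of a fine grid cell by cell would force [m = 0]. *)

From Stdlib Require Import Reals ZArith Lra Psatz Classical IndefiniteDescription.
Open Scope R_scope.

(** * Planar rotations and angles *)

Definition cross (a b : pt2) := fst a * snd b - snd a * fst b.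
Definition dot (a b : pt2) := fst a * fst b + snd a * snd b.
Definition sqnorm (a : pt2) := fst a * fst a + snd a * snd a.
Definition rotate (t : R) (p : pt2) : pt2 :=
  (cos t * fst p - sin t * snd p, sin t * fst p + cos t * snd p).

(* [close_dir a b]: [b] lies within [PI/4] of the direction of [a]; [angle a b]
   is then the oriented angle from [a] to [b]. *)
Definition close_dir (a b : pt2) := Rabs (cross a b) < dot a b.
Definition angle (a b : pt2) := atan (cross a b / dot a b).

Lemma rotate_rotate s t p : rotate s (rotate t p) = rotate (s + t) p.
Proof. destruct p; unfold rotate; simpl; rewrite cos_plus, sin_plus; f_equal; ring. Qed.

Lemma rotate_vscale t k p : rotate t (vscale k p) = vscale k (rotate t p).
Proof. destruct p; unfold rotate, vscale; simpl; f_equal; ring. Qed.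

Lemma rotate_vadd t p q : rotate t (vadd p q) = vadd (rotate t p) (rotate t q).
Proof. unfold rotate, vadd; simpl; f_equal; ring. Qed.

Lemma rotate_origin t : rotate t (0, 0) = (0, 0).
Proof. unfold rotate; simpl; f_equal; ring. Qed.

Lemma rotate_period t p : cos t = 1 -> sin t = 0 -> rotate t p = p.
Proof. intros C S; destruct p; unfold rotate; simpl; rewrite C, S; f_equal; ring. Qed.

Lemma rotate_zero_angle a p : rotate (a - a) p = p.
Proof. rewrite Rminus_diag; apply rotate_period; [apply cos_0 | apply sin_0]. Qed.

Lemma rotate_polar t k a : rotate t (k * cos a, k * sin a) = (k * cos (a + t), k * sin (a + t)).
Proof. unfold rotate; simpl; rewrite cos_plus, sin_plus; f_equal; ring. Qed.

Lemma rot_polar k a b p : 0 < k ->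
  rot (vscale (/ k) (k * cos a, k * sin a)) (vscale (/ k) (k * cos b, k * sin b)) p
  = rotate (b - a) p.
Proof.
  intros Hk; unfold rot, vscale, rotate; simpl.
  rewrite cos_minus, sin_minus; f_equal; field_simplify; try lra; ring.
Qed.

Lemma sqnorm_rotate t p : sqnorm (rotate t p) = sqnorm p.
Proof. unfold sqnorm, rotate; simpl; pose proof (sin2_cos2 t); unfold Rsqr in *; nra. Qed.

Lemma sqnorm_pos p : p <> (0, 0) -> 0 < sqnorm p.
Proof.
  destruct p as [a b]; unfold sqnorm; simpl; intros H.
  destruct (Req_dec a 0), (Req_dec b 0); subst; try nra; congruence.
Qed.

Lemma rotate_eq_origin t p : rotate t p = (0, 0) -> p = (0, 0).
Proof.
  intros E; pose proof (sqnorm_rotate t p) as N; rewrite E in N.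
  destruct p as [a b]; unfold sqnorm in N; simpl in N; f_equal; nra.
Qed.

Lemma vsub_eq_origin p q : vsub p q = (0, 0) -> p = q.
Proof.
  destruct p, q; unfold vsub; simpl; intros E; injection E; intros; f_equal; lra.
Qed.

Lemma sqnorm_pos_of_dot a b : 0 < dot a b -> 0 < sqnorm b.
Proof.
  unfold dot, sqnorm; intros H.
  destruct (Req_dec (snd b) 0) as [E|E]; [|nra].
  destruct (Req_dec (fst b) 0) as [E'|E']; [rewrite E, E' in H; lra | rewrite E; nra].
Qed.

Lemma close_dir_sym a b : close_dir a b -> close_dir b a.
Proof.
  unfold close_dir, cross, dot; intros H.
  replace (fst b * snd a - snd b * fst a) with (- (fst a * snd b - snd a * fst b)) by ring.
  rewrite Rabs_Ropp; lra.
Qed.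

Lemma angle_antisym a b : angle b a = - angle a b.
Proof.
  unfold angle, cross, dot; rewrite <- atan_opp; f_equal.
  replace (fst b * fst a + snd b * snd a) with (fst a * fst b + snd a * snd b) by ring.
  unfold Rdiv; ring.
Qed.

Lemma angle_self a : angle a a = 0.
Proof.
  unfold angle, cross; replace (fst a * snd a - snd a * fst a) with 0 by ring.
  unfold Rdiv; rewrite Rmult_0_l; apply atan_0.
Qed.

Lemma angle_bound a b : close_dir a b -> - (PI / 4) < angle a b < PI / 4.
Proof.
  unfold close_dir, angle; intros H.
  assert (Hd : 0 < dot a b) by (pose proof (Rabs_pos (cross a b)); lra).
  apply Rabs_def2 in H; destruct H as [H1 H2].
  assert (Hq : -1 < cross a b / dot a b < 1).
  { split; apply (Rmult_lt_reg_r (dot a b)); auto;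
      unfold Rdiv; rewrite Rmult_assoc, Rinv_l by lra; lra. }
  rewrite <- atan_1, <- atan_opp; split; apply atan_increasing; lra.
Qed.

Lemma angle_spec a b : 0 < sqnorm a -> 0 < dot a b ->
  exists k, 0 < k /\ b = vscale k (rotate (angle a b) a).
Proof.
  intros Ha Hd; unfold angle.
  set (x := cross a b / dot a b); set (r := sqrt (1 + x²)).
  assert (Hr : 0 < r) by (apply sqrt_lt_R0; pose proof (Rle_0_sqr x); lra).
  exists (r * dot a b / sqnorm a); split.
  - apply Rdiv_lt_0_compat; auto; apply Rmult_lt_0_compat; auto.
  - unfold rotate, vscale; rewrite cos_atan, sin_atan; fold r.
    destruct a as [a1 a2], b as [b1 b2]; unfold x, cross, dot, sqnorm in *; simpl in *.
    f_equal; field_simplify; try lra; field_simplify_eq; try lra; ring.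
Qed.

Lemma angle_unique a k t : 0 < sqnorm a -> 0 < k -> - (PI / 2) < t < PI / 2 ->
  angle a (vscale k (rotate t a)) = t.
Proof.
  intros Ha Hk Ht; unfold angle.
  assert (Hc : 0 < cos t) by (apply cos_gt_0; lra).
  transitivity (atan (tan t)); [f_equal | apply atan_tan; lra].
  unfold tan, cross, dot, vscale, rotate, sqnorm in *; destruct a as [a1 a2]; simpl in *.
  field; split; [lra|]; intro Z.
  assert (Z' : k * cos t * (a1 * a1 + a2 * a2) = 0) by (rewrite <- Z; ring).
  apply Rmult_integral in Z' as [Z'|Z']; [apply Rmult_integral in Z'|]; lra.
Qed.

Lemma angle_rotate v s t : 0 < sqnorm v -> Rabs (t - s) < PI / 2 ->
  angle (rotate s v) (rotate t v) = t - s.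
Proof.
  intros Hv Hts.
  replace (rotate t v) with (vscale 1 (rotate (t - s) (rotate s v))).
  - apply angle_unique; [rewrite sqnorm_rotate; auto | lra | revert Hts; split_Rabs; lra].
  - rewrite rotate_rotate; replace (t - s + s) with t by ring.
    unfold vscale; destruct (rotate t v); simpl; f_equal; ring.
Qed.

Lemma angle_add a b c : 0 < sqnorm a -> close_dir a b -> close_dir b c -> close_dir a c ->
  angle a c = angle a b + angle b c.
Proof.
  intros Ha Hab Hbc Hac.
  pose proof (angle_bound _ _ Hab); pose proof (angle_bound _ _ Hbc).
  assert (Hd1 : 0 < dot a b) by (unfold close_dir in Hab; pose proof (Rabs_pos (cross a b)); lra).
  assert (Hd2 : 0 < dot b c) by (unfold close_dir in Hbc; pose proof (Rabs_pos (cross b c)); lra).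
  destruct (angle_spec a b Ha Hd1) as [k1 [Hk1 E1]].
  destruct (angle_spec b c (sqnorm_pos_of_dot _ _ Hd1) Hd2) as [k2 [Hk2 E2]].
  set (t1 := angle a b) in *; set (t2 := angle b c) in *; clearbody t1 t2.
  replace c with (vscale (k2 * k1) (rotate (t1 + t2) a)).
  - apply angle_unique; auto; [apply Rmult_lt_0_compat; auto | lra].
  - rewrite E2, E1, rotate_vscale, rotate_rotate, (Rplus_comm t2).
    unfold vscale; simpl; f_equal; ring.
Qed.

Lemma angle_cell a b c d : 0 < sqnorm a -> 0 < sqnorm c ->
  close_dir a b -> close_dir b c -> close_dir a c -> close_dir c d -> close_dir d a ->
  angle a b + angle b c + angle c d + angle d a = 0.
Proof.
  intros Ha Hc H1 H2 H3 H4 H5.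
  rewrite <- (angle_add a b c) by auto.
  assert (angle c a = angle c d + angle d a) by (apply angle_add; auto; apply close_dir_sym; auto).
  rewrite (angle_antisym a c) in H; lra.
Qed.

Lemma close_dir_perturb a b M mu e : 0 <= M -> 0 <= e -> mu <= sqnorm a ->
  Rabs (fst a) <= M -> Rabs (snd a) <= M ->
  Rabs (fst b - fst a) <= e -> Rabs (snd b - snd a) <= e -> 4 * M * e < mu -> close_dir a b.
Proof.
  intros HM He Hmu H1 H2 H3 H4 H5; unfold close_dir, cross, dot.
  destruct a as [a1 a2], b as [b1 b2]; unfold sqnorm in Hmu; simpl in *.
  replace (a1 * b2 - a2 * b1) with (a1 * (b2 - a2) - a2 * (b1 - a1)) by ring.
  replace (a1 * b1 + a2 * b2) with (a1 * a1 + a2 * a2 + a1 * (b1 - a1) + a2 * (b2 - a2)) by ring.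
  assert (P : forall x y K f, Rabs x <= K -> Rabs y <= f -> Rabs (x * y) <= K * f).
  { intros; rewrite Rabs_mult; apply Rmult_le_compat; auto; apply Rabs_pos. }
  pose proof (P _ _ _ _ H1 H4); pose proof (P _ _ _ _ H2 H3);
  pose proof (P _ _ _ _ H1 H3); pose proof (P _ _ _ _ H2 H4).
  revert H H0 H6 H7; split_Rabs; lra.
Qed.
(** * Uniform continuity on the unit interval and square *)

Definition ucont01 (f : R -> R) := forall eps, 0 < eps -> exists del, 0 < del /\
  forall x y, 0 <= x <= 1 -> 0 <= y <= 1 -> Rabs (x - y) < del -> Rabs (f x - f y) < eps.

Definition ucont_sq (f : R -> R -> R) := forall eps, 0 < eps -> exists del, 0 < del /\
  forall x y x' y', 0 <= x <= 1 -> 0 <= y <= 1 -> 0 <= x' <= 1 -> 0 <= y' <= 1 ->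
  Rabs (x - x') < del -> Rabs (y - y') < del -> Rabs (f x y - f x' y') < eps.

Definition clamp01 (x : R) := Rmax 0 (Rmin 1 x).

Lemma clamp01_id x : 0 <= x <= 1 -> clamp01 x = x.
Proof. intros; unfold clamp01, Rmax, Rmin; repeat destruct Rle_dec; lra. Qed.

Lemma clamp01_in x : 0 <= clamp01 x <= 1.
Proof. unfold clamp01, Rmax, Rmin; repeat destruct Rle_dec; lra. Qed.

Lemma clamp01_lipschitz x y : Rabs (clamp01 y - clamp01 x) <= Rabs (y - x).
Proof. unfold clamp01, Rmax, Rmin; repeat destruct Rle_dec; split_Rabs; lra. Qed.

Lemma continuity_pt_eps (f : R -> R) x :
  (forall eps, 0 < eps -> exists del, 0 < del /\
     forall y, Rabs (y - x) < del -> Rabs (f y - f x) < eps) ->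
  continuity_pt f x.
Proof.
  intros H eps Heps; destruct (H eps Heps) as [d [Hd Hf]].
  exists d; split; auto; intros y [_ Hy]; apply Hf; auto.
Qed.

Lemma ucont01_clamp_continuous f : ucont01 f -> continuity (fun t => f (clamp01 t)).
Proof.
  intros H x; apply continuity_pt_eps; intros eps He.
  destruct (H eps He) as [d [Hd Hf]]; exists d; split; auto.
  intros y Hy; apply Hf; try apply clamp01_in.
  pose proof (clamp01_lipschitz x y); lra.
Qed.

(* Heine's theorem, applied to the extension of [f] that is constant outside [0, 1]. *)
Lemma ucont01_of_cont f : cont_on01 f -> ucont01 f.
Proof.
  intros H.
  assert (HU : uniform_continuity (fun t => f (clamp01 t)) (fun c => 0 <= c <= 1)).
  { apply Heine; [apply compact_P3|]. intros x Hx; apply continuity_pt_eps.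
    intros eps He; destruct (H x Hx eps He) as [d [Hd Hf]]; exists d; split; auto.
    intros y Hy; rewrite (clamp01_id x Hx).
    pose proof (clamp01_lipschitz x y) as L; rewrite (clamp01_id x Hx) in L.
    destruct (Req_dec (clamp01 y) x) as [E|E].
    - rewrite E, Rminus_diag, Rabs_R0; auto.
    - apply (Hf (clamp01 y)); repeat split; try apply clamp01_in; auto.
      simpl; unfold R_dist; lra. }
  intros eps He; destruct (HU (mkposreal eps He)) as [[d Hd] Hf]; exists d; split; auto.
  intros x y Hx Hy Hxy; specialize (Hf x y Hx Hy Hxy); rewrite !clamp01_id in Hf; auto.
Qed.

Lemma ucont01_min f : ucont01 f ->
  exists x0, 0 <= x0 <= 1 /\ forall x, 0 <= x <= 1 -> f x0 <= f x.
Proof.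
  intros H.
  destruct (continuity_ab_min (fun t => f (clamp01 t)) 0 1) as [x0 [H1 H2]]; [lra| |].
  - intros; apply ucont01_clamp_continuous; auto.
  - exists x0; split; auto; intros x Hx; specialize (H1 x Hx); rewrite !clamp01_id in H1; auto.
Qed.

(* Minimise first in [x] for each fixed [y], then minimise the partial minimum in [y]. *)
Lemma ucont_sq_min k : ucont_sq k -> exists x0 y0, 0 <= x0 <= 1 /\ 0 <= y0 <= 1 /\
  forall x y, 0 <= x <= 1 -> 0 <= y <= 1 -> k x0 y0 <= k x y.
Proof.
  intros H.
  assert (Hy : forall y, exists x, 0 <= y <= 1 ->
            0 <= x <= 1 /\ forall x', 0 <= x' <= 1 -> k x y <= k x' y).
  { intros y; destruct (Rle_dec 0 y), (Rle_dec y 1); try (exists 0; intros; lra).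
    destruct (ucont01_min (fun x => k x y)) as [x0 Hx0]; [|exists x0; auto].
    intros eps He; destruct (H eps He) as [d [Hd Hf]]; exists d; split; auto.
    intros; apply Hf; auto; try lra; rewrite Rminus_diag, Rabs_R0; auto. }
  destruct (functional_choice _ Hy) as [mx Hmx].
  destruct (ucont01_min (fun y => k (mx y) y)) as [y0 [Hy0 Hmin]].
  - intros eps He; destruct (H eps He) as [d [Hd Hf]]; exists d; split; auto.
    intros y y' Hy1 Hy2 Hyy.
    destruct (Hmx y Hy1) as [A1 A2], (Hmx y' Hy2) as [B1 B2].
    specialize (A2 (mx y') B1); specialize (B2 (mx y) A1).
    assert (U1 := Hf (mx y') y (mx y') y' B1 Hy1 B1 Hy2).
    assert (U2 := Hf (mx y) y' (mx y) y A1 Hy2 A1 Hy1).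
    rewrite Rminus_diag, Rabs_R0 in U1, U2; rewrite Rabs_minus_sym in U2.
    specialize (U1 Hd Hyy); specialize (U2 Hd Hyy).
    split_Rabs; lra.
  - exists (mx y0), y0; destruct (Hmx y0 Hy0) as [A1 A2]; repeat split; try lra.
    intros x y Hx Hy1; specialize (Hmin y Hy1); destruct (Hmx y Hy1) as [_ B].
    specialize (B x Hx); lra.
Qed.

Lemma ucont_sq_opp f : ucont_sq f -> ucont_sq (fun x y => - f x y).
Proof.
  intros H eps He; destruct (H eps He) as [d [Hd Hf]]; exists d; split; auto.
  intros; replace (- f x y - - f x' y') with (- (f x y - f x' y')) by ring.
  rewrite Rabs_Ropp; auto.
Qed.

Lemma ucont_sq_bound f : ucont_sq f ->
  exists M, 0 <= M /\ forall x y, 0 <= x <= 1 -> 0 <= y <= 1 -> Rabs (f x y) <= M.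
Proof.
  intros H.
  destruct (ucont_sq_min f H) as [x0 [y0 [_ [_ H1]]]].
  destruct (ucont_sq_min _ (ucont_sq_opp f H)) as [x1 [y1 [_ [_ H2]]]].
  exists (Rabs (f x0 y0) + Rabs (f x1 y1)); split.
  - pose proof (Rabs_pos (f x0 y0)); pose proof (Rabs_pos (f x1 y1)); lra.
  - intros x y Hx Hy; specialize (H1 x y Hx Hy); specialize (H2 x y Hx Hy); split_Rabs; lra.
Qed.

Lemma ucont_sq_const a : ucont_sq (fun _ _ => a).
Proof. intros eps He; exists 1; split; [lra|]; intros; rewrite Rminus_diag, Rabs_R0; auto. Qed.

Lemma ucont_sq_ext f g : (forall x y, f x y = g x y) -> ucont_sq g -> ucont_sq f.
Proof.
  intros E H eps He; destruct (H eps He) as [d [Hd Hf]]; exists d; split; auto.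
  intros; rewrite !E; auto.
Qed.

Lemma ucont_sq_plus f g : ucont_sq f -> ucont_sq g -> ucont_sq (fun x y => f x y + g x y).
Proof.
  intros Hf Hg eps He.
  destruct (Hf (eps / 2)) as [d1 [Hd1 F]], (Hg (eps / 2)) as [d2 [Hd2 G]]; try lra.
  exists (Rmin d1 d2); split; [apply Rmin_pos; auto|]; intros.
  pose proof (Rmin_l d1 d2); pose proof (Rmin_r d1 d2).
  assert (A : Rabs (f x y - f x' y') < eps / 2) by (apply F; auto; lra).
  assert (B : Rabs (g x y - g x' y') < eps / 2) by (apply G; auto; lra).
  split_Rabs; lra.
Qed.

Lemma ucont_sq_minus f g : ucont_sq f -> ucont_sq g -> ucont_sq (fun x y => f x y - g x y).
Proof. intros; apply (ucont_sq_plus f (fun x y => - g x y)); auto; apply ucont_sq_opp; auto. Qed.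

Lemma ucont_sq_mult f g : ucont_sq f -> ucont_sq g -> ucont_sq (fun x y => f x y * g x y).
Proof.
  intros Hf Hg.
  destruct (ucont_sq_bound f Hf) as [Mf [HMf Bf]], (ucont_sq_bound g Hg) as [Mg [HMg Bg]].
  intros eps He; set (e' := eps / (2 * (Mf + Mg + 1))).
  assert (He' : 0 < e') by (unfold e'; apply Rdiv_lt_0_compat; lra).
  destruct (Hf e' He') as [d1 [Hd1 F]], (Hg e' He') as [d2 [Hd2 G]].
  exists (Rmin d1 d2); split; [apply Rmin_pos; auto|]; intros.
  pose proof (Rmin_l d1 d2); pose proof (Rmin_r d1 d2).
  assert (A : Rabs (f x y - f x' y') < e') by (apply F; auto; lra).
  assert (B : Rabs (g x y - g x' y') < e') by (apply G; auto; lra).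
  replace (f x y * g x y - f x' y' * g x' y')
    with ((f x y - f x' y') * g x y + f x' y' * (g x y - g x' y')) by ring.
  assert (E1 : Rabs ((f x y - f x' y') * g x y) <= e' * Mg).
  { rewrite Rabs_mult; apply Rmult_le_compat; try apply Rabs_pos; try lra; apply Bg; auto. }
  assert (E2 : Rabs (f x' y' * (g x y - g x' y')) <= Mf * e').
  { rewrite Rabs_mult; apply Rmult_le_compat; try apply Rabs_pos; try lra; apply Bf; auto. }
  assert (E3 : e' * Mg + Mf * e' < eps).
  { unfold e'; apply (Rmult_lt_reg_r (2 * (Mf + Mg + 1))); [lra|]; field_simplify; nra. }
  pose proof (Rabs_triang ((f x y - f x' y') * g x y) (f x' y' * (g x y - g x' y'))); lra.
Qed.

Lemma ucont_sq_of_snd u : ucont01 u -> ucont_sq (fun _ y => u y).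
Proof. intros H eps He; destruct (H eps He) as [d [Hd F]]; exists d; split; auto. Qed.

Lemma ucont_sq_of_mult u : ucont01 u -> ucont_sq (fun x y => u (x * y)).
Proof.
  intros H eps He; destruct (H eps He) as [d [Hd F]]; exists (d / 2); split; [lra|].
  intros x y x' y' Hx Hy Hx' Hy' H1 H2; apply F; try (split; nra).
  replace (x * y - x' * y') with ((x - x') * y + x' * (y - y')) by ring.
  assert (A1 : Rabs ((x - x') * y) <= Rabs (x - x')).
  { rewrite Rabs_mult, (Rabs_right y) by lra; pose proof (Rabs_pos (x - x')); nra. }
  assert (A2 : Rabs (x' * (y - y')) <= Rabs (y - y')).
  { rewrite Rabs_mult, (Rabs_right x') by lra; pose proof (Rabs_pos (y - y')); nra. }
  pose proof (Rabs_triang ((x - x') * y) (x' * (y - y'))); lra.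
Qed.

Definition ucont_sq_vec (H : R -> R -> pt2) :=
  ucont_sq (fun x y => fst (H x y)) /\ ucont_sq (fun x y => snd (H x y)).

Definition ucont_sq_angle (a : R -> R -> R) :=
  ucont_sq (fun x y => cos (a x y)) /\ ucont_sq (fun x y => sin (a x y)).

Lemma ucont_sq_angle_minus a b : ucont_sq_angle a -> ucont_sq_angle b ->
  ucont_sq_angle (fun x y => a x y - b x y).
Proof.
  intros [Ca Sa] [Cb Sb]; split.
  - apply (ucont_sq_ext _ (fun x y => cos (a x y) * cos (b x y) + sin (a x y) * sin (b x y)));
      [intros; apply cos_minus | apply ucont_sq_plus; apply ucont_sq_mult; auto].
  - apply (ucont_sq_ext _ (fun x y => sin (a x y) * cos (b x y) - cos (a x y) * sin (b x y)));
      [intros; apply sin_minus | apply ucont_sq_minus; apply ucont_sq_mult; auto].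
Qed.

Lemma ucont_sq_angle_const t : ucont_sq_angle (fun _ _ => t).
Proof. split; apply ucont_sq_const. Qed.

Lemma ucont_sq_vec_const p : ucont_sq_vec (fun _ _ => p).
Proof. split; apply ucont_sq_const. Qed.

Lemma ucont_sq_vec_vadd F G : ucont_sq_vec F -> ucont_sq_vec G ->
  ucont_sq_vec (fun x y => vadd (F x y) (G x y)).
Proof. intros [] []; split; apply ucont_sq_plus; auto. Qed.

Lemma ucont_sq_vec_vsub F G : ucont_sq_vec F -> ucont_sq_vec G ->
  ucont_sq_vec (fun x y => vsub (F x y) (G x y)).
Proof. intros [] []; split; apply ucont_sq_minus; auto. Qed.

Lemma ucont_sq_vec_rotate a F : ucont_sq_angle a -> ucont_sq_vec F ->
  ucont_sq_vec (fun x y => rotate (a x y) (F x y)).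
Proof.
  intros [] []; split; simpl;
    [apply ucont_sq_minus | apply ucont_sq_plus]; apply ucont_sq_mult; auto.
Qed.

Lemma ucont_sq_sqnorm F : ucont_sq_vec F -> ucont_sq (fun x y => sqnorm (F x y)).
Proof. intros []; unfold sqnorm; apply ucont_sq_plus; apply ucont_sq_mult; auto. Qed.

(** * A discrete winding number argument *)

Fixpoint rsum (f : nat -> R) (n : nat) : R :=
  match n with 0%nat => 0 | S k => rsum f k + f k end.

Lemma rsum_ext f g n : (forall i, (i < n)%nat -> f i = g i) -> rsum f n = rsum g n.
Proof. induction n; simpl; intros; auto; rewrite IHn, H; auto. Qed.

Lemma rsum_eq0 f n : (forall i, (i < n)%nat -> f i = 0) -> rsum f n = 0.
Proof. induction n; simpl; intros; auto; rewrite IHn, H; auto; lra. Qed.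

Lemma rsum_plus f g n : rsum (fun i => f i + g i) n = rsum f n + rsum g n.
Proof. induction n; simpl; [lra|]; rewrite IHn; lra. Qed.

Lemma rsum_minus f g n : rsum (fun i => f i - g i) n = rsum f n - rsum g n.
Proof. induction n; simpl; [lra|]; rewrite IHn; lra. Qed.

Lemma rsum_telescope h n : rsum (fun i => h (S i) - h i) n = h n - h 0%nat.
Proof. induction n; simpl; [lra|]; rewrite IHn; lra. Qed.

(* Sum of [angle_cell] over all cells of the grid. *)
Lemma grid_angle_balance (p : nat -> nat -> pt2) (N : nat) :
  (forall i j, (i <= N)%nat -> (j <= N)%nat -> 0 < sqnorm (p i j)) ->
  (forall i j i' j', (i <= N)%nat -> (j <= N)%nat -> (i' <= N)%nat -> (j' <= N)%nat ->
     (i <= S i')%nat -> (i' <= S i)%nat -> (j <= S j')%nat -> (j' <= S j)%nat ->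
     close_dir (p i j) (p i' j')) ->
  rsum (fun j => angle (p N j) (p N (S j))) N - rsum (fun j => angle (p 0%nat j) (p 0%nat (S j))) N
  = rsum (fun i => angle (p i N) (p (S i) N)) N - rsum (fun i => angle (p i 0%nat) (p (S i) 0%nat)) N.
Proof.
  intros Hnz Hclose.
  set (row := fun j => rsum (fun i => angle (p i j) (p (S i) j)) N).
  set (col := fun i j => angle (p i j) (p i (S j))).
  assert (Hstep : forall j, (j < N)%nat -> col N j - col 0%nat j = row (S j) - row j).
  { intros j Hj.
    assert (Hcells : rsum (fun i => (angle (p i j) (p (S i) j) - angle (p i (S j)) (p (S i) (S j)))
                                    + (col (S i) j - col i j)) N = 0).
    { apply rsum_eq0; intros i Hi; unfold col.
      pose proof (angle_cell (p i j) (p (S i) j) (p (S i) (S j)) (p i (S j))) as Cell.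
      rewrite (angle_antisym (p i (S j)) (p (S i) (S j)) ), (angle_antisym (p i j) (p i (S j))) in Cell.
      rewrite <- Cell; [ring | apply Hnz; lia | apply Hnz; lia | ..]; apply Hclose; lia. }
    rewrite rsum_plus, rsum_minus, (rsum_telescope (fun i => col i j)) in Hcells.
    unfold row; lra. }
  rewrite <- rsum_minus, (rsum_ext _ (fun j => row (S j) - row j)) by auto.
  rewrite rsum_telescope; reflexivity.
Qed.

Definition grid (N i : nat) : R := INR i / INR N.

Lemma grid_in N i : (0 < N)%nat -> (i <= N)%nat -> 0 <= grid N i <= 1.
Proof.
  intros HN H; apply le_INR in H; apply lt_INR in HN; simpl in HN; unfold grid; split.
  - apply Rle_mult_inv_pos; [apply pos_INR | lra].
  - apply (Rmult_le_reg_r (INR N)); auto; unfold Rdiv; rewrite Rmult_assoc, Rinv_l; lra.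
Qed.

Lemma grid_step N i : (0 < N)%nat -> grid N (S i) - grid N i = / INR N.
Proof. intros HN; apply lt_INR in HN; simpl in HN; unfold grid; rewrite S_INR; field; lra. Qed.

Lemma grid_0 N : grid N 0 = 0.
Proof. unfold grid; simpl; unfold Rdiv; ring. Qed.

Lemma grid_N N : (0 < N)%nat -> grid N N = 1.
Proof. intros HN; apply lt_INR in HN; simpl in HN; unfold grid; field; lra. Qed.

Lemma grid_adjacent N i i' : (0 < N)%nat -> (i <= S i')%nat -> (i' <= S i)%nat ->
  Rabs (grid N i - grid N i') <= / INR N.
Proof.
  intros HN H1 H2; pose proof (Rinv_0_lt_compat _ (lt_0_INR _ HN)).
  destruct (Nat.eq_dec i i') as [->|].
  - rewrite Rminus_diag, Rabs_R0; lra.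
  - destruct (Nat.eq_dec i (S i')) as [->|]; [|replace i' with (S i) by lia].
    + rewrite grid_step, Rabs_right by (auto; lra); lra.
    + rewrite Rabs_minus_sym, grid_step, Rabs_right by (auto; lra); lra.
Qed.

(* [sqnorm H] has a positive minimum on the compact square. *)
Lemma nonvanishing_close_dir (H : R -> R -> pt2) : ucont_sq_vec H ->
  (forall x y, 0 <= x <= 1 -> 0 <= y <= 1 -> H x y <> (0, 0)) ->
  exists del, 0 < del /\ forall x y x' y',
    0 <= x <= 1 -> 0 <= y <= 1 -> 0 <= x' <= 1 -> 0 <= y' <= 1 ->
    Rabs (x - x') < del -> Rabs (y - y') < del -> close_dir (H x y) (H x' y').
Proof.
  intros [U1 U2] Hnz.
  destruct (ucont_sq_min _ (ucont_sq_sqnorm H (conj U1 U2))) as [x0 [y0 [Hx0 [Hy0 Hmin]]]].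
  set (mu := sqnorm (H x0 y0)).
  assert (Hmu : 0 < mu) by (apply sqnorm_pos, Hnz; auto).
  destruct (ucont_sq_bound _ U1) as [M1 [HM1 B1]], (ucont_sq_bound _ U2) as [M2 [HM2 B2]].
  set (M := M1 + M2 + 1); set (e := mu / (4 * M + 4)).
  assert (He : 0 < e) by (unfold e, M; apply Rdiv_lt_0_compat; lra).
  assert (HMe : 4 * M * e < mu).
  { unfold e; apply (Rmult_lt_reg_r (4 * M + 4)); unfold M in *; [lra|]; field_simplify; nra. }
  destruct (U1 e He) as [d1 [Hd1 D1]], (U2 e He) as [d2 [Hd2 D2]].
  exists (Rmin d1 d2); split; [apply Rmin_pos; auto|].
  intros x y x' y' Hx Hy Hx' Hy' Hxx Hyy.
  pose proof (Rmin_l d1 d2); pose proof (Rmin_r d1 d2).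
  pose proof (B1 x y Hx Hy); pose proof (B2 x y Hx Hy).
  apply (close_dir_perturb _ _ M mu e); unfold M in *; try lra; [apply Hmin; auto | | ];
    rewrite Rabs_minus_sym; left; [apply D1 | apply D2]; auto; lra.
Qed.

Lemma boundary_turning_trivial (H : R -> R -> pt2) (phi : R -> R) :
  ucont_sq_vec H -> ucont01 phi ->
  (forall x y, 0 <= x <= 1 -> 0 <= y <= 1 -> H x y <> (0, 0)) ->
  (forall x, 0 <= x <= 1 -> H x 0 = H 0 0) ->
  (forall y, 0 <= y <= 1 -> H 0 y = H 0 0) ->
  (forall x, 0 <= x <= 1 -> H x 1 = H 0 0) ->
  (forall y, 0 <= y <= 1 -> H 1 y = rotate (phi y) (H 0 0)) ->
  phi 1 = phi 0.
Proof.
  intros UH Uphi Hnz Hbot Hleft Htop Hright.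
  destruct (nonvanishing_close_dir H UH Hnz) as [d1 [Hd1 Hclose]].
  destruct (Uphi (PI / 2)) as [d2 [Hd2 Hphi]]; [pose proof PI_RGT_0; lra|].
  destruct (archimed_cor1 (Rmin d1 d2)) as [N [HN HN0]]; [apply Rmin_pos; auto|].
  pose proof (Rmin_l d1 d2); pose proof (Rmin_r d1 d2).
  set (g := grid N).
  assert (Hg : forall i, (i <= N)%nat -> 0 <= g i <= 1) by (intros; apply grid_in; auto).
  assert (Hv : 0 < sqnorm (H 0 0)) by (apply sqnorm_pos, Hnz; lra).
  assert (Bot : rsum (fun i => angle (H (g i) (g 0%nat)) (H (g (S i)) (g 0%nat))) N = 0).
  { apply rsum_eq0; intros i Hi; unfold g.
    rewrite grid_0, (Hbot (grid N i)), (Hbot (grid N (S i))) by (apply grid_in; lia).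
    apply angle_self. }
  assert (Top : rsum (fun i => angle (H (g i) (g N)) (H (g (S i)) (g N))) N = 0).
  { apply rsum_eq0; intros i Hi; unfold g.
    rewrite grid_N, (Htop (grid N i)), (Htop (grid N (S i))) by (auto; apply grid_in; lia).
    apply angle_self. }
  assert (Left : rsum (fun j => angle (H (g 0%nat) (g j)) (H (g 0%nat) (g (S j)))) N = 0).
  { apply rsum_eq0; intros j Hj; unfold g.
    rewrite grid_0, (Hleft (grid N j)), (Hleft (grid N (S j))) by (apply grid_in; lia).
    apply angle_self. }
  assert (Right : rsum (fun j => angle (H (g N) (g j)) (H (g N) (g (S j)))) N = phi 1 - phi 0).
  { rewrite (rsum_ext _ (fun j => phi (g (S j)) - phi (g j))).
    rewrite (rsum_telescope (fun j => phi (g j))).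

    - unfold g; rewrite grid_N, grid_0 by auto; reflexivity.
    - intros j Hj; unfold g.
      rewrite grid_N, (Hright (grid N j)), (Hright (grid N (S j))) by (auto; apply grid_in; lia).
      apply angle_rotate; auto; apply Hphi; try apply grid_in; try lia.
      eapply Rle_lt_trans; [apply grid_adjacent; lia | lra]. }
  pose proof (grid_angle_balance (fun i j => H (g i) (g j)) N) as Hbal; cbv beta in Hbal.
  rewrite Bot, Top, Left, Right in Hbal.
  enough (phi 1 - phi 0 - 0 = 0 - 0) by lra.
  apply Hbal; [intros; apply sqnorm_pos, Hnz; auto |].
  intros; apply Hclose; auto; eapply Rle_lt_trans; try apply grid_adjacent; auto; lra.
Qed.

(** * Derivatives and continuity within an interval *)

Definition near_within (lo hi s : R) (P : R -> Prop) :=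
  exists del, 0 < del /\ forall x, lo <= x <= hi -> Rabs (x - s) < del -> P x.

Definition deriv_within (f : R -> R) (d lo hi s : R) := forall eps, 0 < eps ->
  near_within lo hi s (fun x => x <> s -> Rabs ((f x - f s) / (x - s) - d) < eps).

Definition cont_within (f : R -> R) (lo hi s : R) := forall eps, 0 < eps ->
  near_within lo hi s (fun x => Rabs (f x - f s) < eps).

Lemma near_within_impl lo hi s (P Q : R -> Prop) :
  (forall x, lo <= x <= hi -> P x -> Q x) -> near_within lo hi s P -> near_within lo hi s Q.
Proof. intros PQ [del [Hd HP]]; exists del; split; auto. Qed.

Lemma near_within_ball lo hi s r : 0 < r -> near_within lo hi s (fun x => Rabs (x - s) < r).
Proof. intros Hr; exists r; split; auto. Qed.

Lemma near_within_and lo hi s (P Q : R -> Prop) :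
  near_within lo hi s P -> near_within lo hi s Q -> near_within lo hi s (fun x => P x /\ Q x).
Proof.
  intros [d1 [Hd1 HP]] [d2 [Hd2 HQ]]; exists (Rmin d1 d2); split; [apply Rmin_pos; auto|].
  pose proof (Rmin_l d1 d2); pose proof (Rmin_r d1 d2).
  intros; split; [apply HP | apply HQ]; auto; lra.
Qed.

Lemma near_within_restrict lo hi lo' hi' s P : lo <= lo' -> hi' <= hi ->
  near_within lo hi s P -> near_within lo' hi' s P.
Proof. intros H1 H2 [del [Hd HP]]; exists del; split; auto; intros; apply HP; auto; lra. Qed.

Lemma near_within_shift lo hi s k P :
  near_within lo hi (s + k) P -> near_within (lo - k) (hi - k) s (fun x => P (x + k)).
Proof.
  intros [del [Hd HP]]; exists del; split; auto; intros x Hx Hxs.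
  apply HP; [lra | replace (x + k - (s + k)) with (x - s) by ring; auto].
Qed.

Lemma near_within_glue lo m hi s P : lo <= m <= hi ->
  (s <= m -> near_within lo m s P) -> (m <= s -> near_within m hi s P) -> near_within lo hi s P.
Proof.
  intros Hm Hl Hr; destruct (Rtotal_order s m) as [L|[<-|L]].
  - destruct (Hl ltac:(lra)) as [del [Hd HP]]; exists (Rmin del (m - s)).
    split; [apply Rmin_pos; lra|]; intros x Hx Hxs.
    pose proof (Rmin_l del (m - s)); pose proof (Rmin_r del (m - s)).
    apply HP; [revert Hxs; split_Rabs | ]; lra.
  - destruct (Hl ltac:(lra)) as [d1 [Hd1 H1]], (Hr ltac:(lra)) as [d2 [Hd2 H2]].
    exists (Rmin d1 d2); split; [apply Rmin_pos; lra|]; intros x Hx Hxs.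
    pose proof (Rmin_l d1 d2); pose proof (Rmin_r d1 d2).
    destruct (Rle_dec x s); [apply H1 | apply H2]; lra.
  - destruct (Hr ltac:(lra)) as [del [Hd HP]]; exists (Rmin del (s - m)).
    split; [apply Rmin_pos; lra|]; intros x Hx Hxs.
    pose proof (Rmin_l del (s - m)); pose proof (Rmin_r del (s - m)).
    apply HP; [revert Hxs; split_Rabs | ]; lra.
Qed.

Lemma deriv_within_restrict f d lo hi lo' hi' s : lo <= lo' -> hi' <= hi ->
  deriv_within f d lo hi s -> deriv_within f d lo' hi' s.
Proof. intros H1 H2 H eps He; apply (near_within_restrict lo hi); auto. Qed.

Lemma cont_within_restrict f lo hi lo' hi' s : lo <= lo' -> hi' <= hi ->
  cont_within f lo hi s -> cont_within f lo' hi' s.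
Proof. intros H1 H2 H eps He; apply (near_within_restrict lo hi); auto. Qed.

Lemma deriv_within_shift f d lo hi s k : deriv_within f d lo hi (s + k) ->
  deriv_within (fun x => f (x + k)) d (lo - k) (hi - k) s.
Proof.
  intros H eps He; generalize (near_within_shift _ _ _ _ _ (H eps He)).
  apply near_within_impl; intros x _ P Hxs.
  replace (x - s) with (x + k - (s + k)) by ring; apply P; lra.
Qed.

Lemma cont_within_shift f lo hi s k : cont_within f lo hi (s + k) ->
  cont_within (fun x => f (x + k)) (lo - k) (hi - k) s.
Proof.
  intros H eps He; apply (near_within_shift _ _ _ _ (fun x => Rabs (f x - f (s + k)) < eps)).
  apply H, He.
Qed.

Lemma deriv_within_ext f g d lo hi s : lo <= s <= hi ->
  (forall x, lo <= x <= hi -> f x = g x) -> deriv_within g d lo hi s -> deriv_within f d lo hi s.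
Proof.
  intros Hs E H eps He; generalize (H eps He); apply near_within_impl; intros; rewrite !E; auto.
Qed.

Lemma cont_within_ext f g lo hi s : lo <= s <= hi ->
  (forall x, lo <= x <= hi -> f x = g x) -> cont_within g lo hi s -> cont_within f lo hi s.
Proof.
  intros Hs E H eps He; generalize (H eps He); apply near_within_impl; intros; rewrite !E; auto.
Qed.

Lemma deriv_within_affine f1 f2 d1 d2 a b e lo hi s :
  deriv_within f1 d1 lo hi s -> deriv_within f2 d2 lo hi s ->
  deriv_within (fun x => a + b * f1 x + e * f2 x) (b * d1 + e * d2) lo hi s.
Proof.
  intros H1 H2 eps He.
  pose proof (Rabs_pos b); pose proof (Rabs_pos e).
  set (e' := eps / (Rabs b + Rabs e + 1)).
  assert (He' : 0 < e') by (unfold e'; apply Rdiv_lt_0_compat; lra).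
  assert (Heps : Rabs b * e' + Rabs e * e' < eps).
  { unfold e'; apply (Rmult_lt_reg_r (Rabs b + Rabs e + 1)); [lra|]; field_simplify; lra. }
  generalize (near_within_and _ _ _ _ _ (H1 e' He') (H2 e' He')).
  apply near_within_impl; intros x _ [A1 A2] Hxs.
  specialize (A1 Hxs); specialize (A2 Hxs).
  replace ((a + b * f1 x + e * f2 x - (a + b * f1 s + e * f2 s)) / (x - s) - (b * d1 + e * d2))
    with (b * ((f1 x - f1 s) / (x - s) - d1) + e * ((f2 x - f2 s) / (x - s) - d2))
    by (field; lra).
  eapply Rle_lt_trans; [apply Rabs_triang|]; rewrite !Rabs_mult.
  assert (Rabs b * Rabs ((f1 x - f1 s) / (x - s) - d1) <= Rabs b * e')
    by (apply Rmult_le_compat_l; lra).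
  assert (Rabs e * Rabs ((f2 x - f2 s) / (x - s) - d2) <= Rabs e * e')
    by (apply Rmult_le_compat_l; lra).
  lra.
Qed.

Lemma cont_within_plus_const f a lo hi s :
  cont_within f lo hi s -> cont_within (fun x => f x + a) lo hi s.
Proof.
  intros H eps He; generalize (H eps He); apply near_within_impl; intros x _.
  replace (f x + a - (f s + a)) with (f x - f s) by ring; auto.
Qed.

Lemma deriv_within_glue f g h d lo m hi s : lo <= m <= hi -> lo <= s <= hi ->
  (forall x, lo <= x <= m -> f x = g x) -> (forall x, m <= x <= hi -> f x = h x) ->
  (s <= m -> deriv_within g d lo m s) -> (m <= s -> deriv_within h d m hi s) ->
  deriv_within f d lo hi s.
Proof.
  intros Hm Hs' Eg Eh Hg Hh eps He; apply (near_within_glue _ m); auto; intros Hs.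
  - generalize (Hg Hs eps He); apply near_within_impl; intros x Hx.
    rewrite (Eg x), (Eg s) by lra; auto.
  - generalize (Hh Hs eps He); apply near_within_impl; intros x Hx.
    rewrite (Eh x), (Eh s) by lra; auto.
Qed.

Lemma cont_within_glue f g h lo m hi s : lo <= m <= hi -> lo <= s <= hi ->
  (forall x, lo <= x <= m -> f x = g x) -> (forall x, m <= x <= hi -> f x = h x) ->
  (s <= m -> cont_within g lo m s) -> (m <= s -> cont_within h m hi s) ->
  cont_within f lo hi s.
Proof.
  intros Hm Hs' Eg Eh Hg Hh eps He; apply (near_within_glue _ m); auto; intros Hs.
  - generalize (Hg Hs eps He); apply near_within_impl; intros x Hx.
    rewrite (Eg x), (Eg s) by lra; auto.
  - generalize (Hh Hs eps He); apply near_within_impl; intros x Hx.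
    rewrite (Eh x), (Eh s) by lra; auto.
Qed.

Lemma deriv_within_cont f d lo hi s : deriv_within f d lo hi s -> cont_within f lo hi s.
Proof.
  intros H eps He.
  pose proof (Rabs_pos d).
  assert (Hk : 0 < eps / (Rabs d + 2)) by (apply Rdiv_lt_0_compat; lra).
  assert (Hkd : eps / (Rabs d + 2) * (Rabs d + 2) = eps) by (field; lra).
  generalize (near_within_and _ _ _ _ _ (H 1 ltac:(lra)) (near_within_ball lo hi s _ Hk)).
  apply near_within_impl; intros x _ [Hq Hx].
  destruct (Req_dec x s) as [->|Hxs]; [rewrite Rminus_diag, Rabs_R0; auto|].
  specialize (Hq Hxs).
  replace (f x - f s) with ((f x - f s) / (x - s) * (x - s)) by (field; lra).
  rewrite Rabs_mult.
  assert (Rabs ((f x - f s) / (x - s)) <= Rabs d + 1).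
  { pose proof (Rabs_triang ((f x - f s) / (x - s) - d) d).
    replace ((f x - f s) / (x - s) - d + d) with ((f x - f s) / (x - s)) in * by ring; lra. }
  pose proof (Rabs_pos (x - s)); pose proof (Rabs_pos ((f x - f s) / (x - s))); nra.
Qed.

Lemma cont_within_comp f h lo hi s :
  cont_within f lo hi s -> continuity h -> cont_within (fun t => h (f t)) lo hi s.
Proof.
  intros H Hc eps He; destruct (Hc (f s) eps He) as [d1 [Hd1 F1]].
  generalize (H d1 Hd1); apply near_within_impl; intros x _ Hx.
  destruct (Req_dec (f x) (f s)) as [E|E]; [rewrite E, Rminus_diag, Rabs_R0; auto|].
  apply (F1 (f x)); repeat split; auto.
Qed.

Lemma deriv_within_of_D_in f df s : D_in f df I01 s -> deriv_within f (df s) 0 1 s.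
Proof.
  intros H eps He; destruct (H eps He) as [del [Hd F]]; exists del; split; [lra|].
  intros x Hx Hdx Hxs; apply (F x); split; [split; [exact Hx | auto] | exact Hdx].
Qed.

Lemma D_in_of_deriv_within f df s : deriv_within f (df s) 0 1 s -> D_in f df I01 s.
Proof.
  intros H eps He; destruct (H eps He) as [del [Hd F]]; exists del; split; [lra|].
  intros x [[Hx Hxs] Hdx]; apply F; auto.
Qed.

Lemma cont_within_of_continue_in f s : 0 <= s <= 1 -> continue_in f I01 s -> cont_within f 0 1 s.
Proof.
  intros Hs H eps He; destruct (H eps He) as [del [Hd F]]; exists del; split; [lra|].
  intros x Hx Hdx; destruct (Req_dec x s) as [->|E]; [rewrite Rminus_diag, Rabs_R0; auto|].
  apply (F x); split; [split; [exact Hx | auto] | exact Hdx].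
Qed.

Lemma continue_in_of_cont_within f s : cont_within f 0 1 s -> continue_in f I01 s.
Proof.
  intros H eps He; destruct (H eps He) as [del [Hd F]]; exists del; split; [lra|].
  intros x [[Hx Hxs] Hdx]; apply F; auto.
Qed.

Lemma deriv_within_rigid f1 f2 d1 d2 lo hi s P Q t : lo <= s <= hi ->
  deriv_within f1 d1 lo hi s -> deriv_within f2 d2 lo hi s ->
  deriv_within (fun x => fst (vadd P (rotate t (vsub (f1 x, f2 x) Q))))
    (fst (rotate t (d1, d2))) lo hi s /\
  deriv_within (fun x => snd (vadd P (rotate t (vsub (f1 x, f2 x) Q))))
    (snd (rotate t (d1, d2))) lo hi s.
Proof.
  intros Hs H1 H2; unfold vadd, rotate, vsub; simpl; split.
  - replace (cos t * d1 - sin t * d2) with (cos t * d1 + - sin t * d2) by ring.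
    eapply deriv_within_ext; [exact Hs| |apply (deriv_within_affine f1 f2 d1 d2
      (fst P - cos t * fst Q + sin t * snd Q) (cos t) (- sin t)); eauto].
    intros; simpl; ring.
  - eapply deriv_within_ext; [exact Hs| |apply (deriv_within_affine f1 f2 d1 d2
      (snd P - sin t * fst Q - cos t * snd Q) (sin t) (cos t)); eauto].
    intros; simpl; ring.
Qed.

Lemma cont_within_polar f k lo hi s : cont_within f lo hi s ->
  cont_within (fun x => k * cos (f x)) lo hi s /\ cont_within (fun x => k * sin (f x)) lo hi s.
Proof.
  intros H; split; [apply (cont_within_comp f (fun z => k * cos z)) |
                    apply (cont_within_comp f (fun z => k * sin z))]; auto; intros z;
    (apply (continuity_pt_mult (fun _ => k));
      [apply continuity_pt_const; intros ? ?; reflexivity |]);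
    [apply continuity_cos | apply continuity_sin].
Qed.

(** * Concatenation of curve pieces *)

Record turning_piece (c : R) (A : piece) (al : R -> R) : Prop := {
  tp_le : lo A <= hi A;
  tp_tang : forall s, lo A <= s <= hi A -> tang A s = (c * cos (al s), c * sin (al s));
  tp_deriv : forall s, lo A <= s <= hi A ->
    deriv_within (fun x => fst (pos A x)) (fst (tang A s)) (lo A) (hi A) s /\
    deriv_within (fun x => snd (pos A x)) (snd (tang A s)) (lo A) (hi A) s;
  tp_cont : forall s, lo A <= s <= hi A -> cont_within al (lo A) (hi A) s }.

(* The turning angle of [concat c A B]: that of [B], shifted to continue that of [A]. *)
Definition concat_angle (A B : piece) (al be : R -> R) (s : R) : R :=
  if Rle_dec s (hi A - lo A) then al (s + lo A)
  else be (s - (hi A - lo A) + lo B) + al (hi A) - be (lo B).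

Section Concat.

Variables (c : R) (A B : piece) (al be : R -> R).
Hypothesis Hc : 0 < c.
Hypothesis GA : turning_piece c A al.
Hypothesis GB : turning_piece c B be.

Let LA := hi A - lo A.
Let LB := hi B - lo B.
Let dl := al (hi A) - be (lo B).

Lemma concat_rot p :
  rot (vscale (/ c) (tang B (lo B))) (vscale (/ c) (tang A (hi A))) p = rotate dl p.
Proof.
  pose proof (tp_le _ _ _ GA); pose proof (tp_le _ _ _ GB).
  rewrite (tp_tang _ _ _ GB), (tp_tang _ _ _ GA) by lra; apply rot_polar; auto.
Qed.

Lemma concat_pos_l s : s <= LA -> pos (concat c A B) s = pos A (s + lo A).
Proof. intros H; unfold concat; simpl; destruct Rle_dec; [auto | unfold LA in H; lra]. Qed.

Lemma concat_tang_l s : s <= LA -> tang (concat c A B) s = tang A (s + lo A).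
Proof. intros H; unfold concat; simpl; destruct Rle_dec; [auto | unfold LA in H; lra]. Qed.

Lemma concat_angle_l s : s <= LA -> concat_angle A B al be s = al (s + lo A).
Proof. intros H; unfold concat_angle; destruct Rle_dec; [auto | unfold LA in H; lra]. Qed.

Lemma concat_pos_r s : LA <= s -> pos (concat c A B) s =
  vadd (pos A (hi A)) (rotate dl (vsub (pos B (s - LA + lo B)) (pos B (lo B)))).
Proof.
  intros H; unfold concat; simpl; fold LA; destruct Rle_dec; [|rewrite concat_rot; auto].
  replace s with LA by lra; unfold LA.
  replace (hi A - lo A + lo A) with (hi A) by ring;
  replace (hi A - lo A - (hi A - lo A) + lo B) with (lo B) by ring.
  unfold vsub, vadd; rewrite !Rminus_diag, rotate_origin; destruct (pos A (hi A)); simpl.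
  f_equal; ring.
Qed.

Lemma concat_tang_r s : LA <= s -> tang (concat c A B) s = rotate dl (tang B (s - LA + lo B)).
Proof.
  intros H; pose proof (tp_le _ _ _ GA); pose proof (tp_le _ _ _ GB).
  unfold concat; simpl; fold LA; destruct Rle_dec; [|rewrite concat_rot; auto].
  replace s with LA by lra; unfold LA.
  replace (hi A - lo A + lo A) with (hi A) by ring;
  replace (hi A - lo A - (hi A - lo A) + lo B) with (lo B) by ring.
  rewrite (tp_tang _ _ _ GA), (tp_tang _ _ _ GB), rotate_polar by lra; unfold dl.
  replace (be (lo B) + (al (hi A) - be (lo B))) with (al (hi A)) by ring; auto.
Qed.

Lemma concat_angle_r s : LA <= s ->
  concat_angle A B al be s = be (s - LA + lo B) + al (hi A) - be (lo B).
Proof.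
  intros H; unfold concat_angle; fold LA; destruct Rle_dec; auto.
  replace s with LA by lra; unfold LA.
  replace (hi A - lo A + lo A) with (hi A) by ring;
  replace (hi A - lo A - (hi A - lo A) + lo B) with (lo B) by ring; ring.
Qed.

Lemma concat_deriv_l s : 0 <= s <= LA ->
  deriv_within (fun x => fst (pos (concat c A B) x)) (fst (tang (concat c A B) s)) 0 LA s /\
  deriv_within (fun x => snd (pos (concat c A B) x)) (snd (tang (concat c A B) s)) 0 LA s.
Proof.
  intros Hs; rewrite concat_tang_l by lra.
  destruct (tp_deriv _ _ _ GA (s + lo A)) as [D1 D2]; [unfold LA in *; lra|].
  apply deriv_within_shift, (deriv_within_restrict _ _ _ _ 0 LA) in D1, D2; try (unfold LA; lra).
  split; (eapply deriv_within_ext; [exact Hs| |eassumption]); intros x Hx;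
    rewrite concat_pos_l by lra; reflexivity.
Qed.

Lemma concat_deriv_r s : LA <= s <= LA + LB ->
  deriv_within (fun x => fst (pos (concat c A B) x)) (fst (tang (concat c A B) s)) LA (LA + LB) s /\
  deriv_within (fun x => snd (pos (concat c A B) x)) (snd (tang (concat c A B) s)) LA (LA + LB) s.
Proof.
  intros Hs; rewrite concat_tang_r by lra.
  set (k := lo B - LA).
  destruct (tp_deriv _ _ _ GB (s + k)) as [D1 D2]; [unfold k, LA, LB in *; lra|].
  apply deriv_within_shift, (deriv_within_restrict _ _ _ _ LA (LA + LB)) in D1, D2;
    try (unfold k, LB; lra).
  destruct (deriv_within_rigid _ _ _ _ _ _ _ (pos A (hi A)) (pos B (lo B)) dl Hs D1 D2) as [E1 E2].
  replace (s - LA + lo B) with (s + k) by (unfold k; ring).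
  destruct (tang B (s + k)).
  split; (eapply deriv_within_ext; [exact Hs| |eassumption]); intros x Hx;
    rewrite concat_pos_r by lra; replace (x - LA + lo B) with (x + k) by (unfold k; ring);
    destruct (pos B (x + k)); reflexivity.
Qed.

Lemma concat_angle_cont s : 0 <= s <= LA + LB -> cont_within (concat_angle A B al be) 0 (LA + LB) s.
Proof.
  intros Hs; pose proof (tp_le _ _ _ GA); pose proof (tp_le _ _ _ GB).
  assert (LA0 : 0 <= LA) by (unfold LA; lra); assert (LB0 : 0 <= LB) by (unfold LB; lra).
  set (k := lo B - LA).
  apply (cont_within_glue _ (fun x => al (x + lo A)) (fun x => be (x + k) + (al (hi A) - be (lo B)))
           0 LA); try lra.
  - intros x Hx; apply concat_angle_l; lra.
  - intros x Hx; rewrite concat_angle_r by lra.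
    replace (x - LA + lo B) with (x + k) by (unfold k; ring); ring.
  - intros Hs'; apply (cont_within_restrict _ (lo A - lo A) (hi A - lo A)); try (unfold LA; lra).
    apply cont_within_shift, (tp_cont _ _ _ GA); unfold LA in *; lra.
  - intros Hs'; apply cont_within_plus_const.
    apply (cont_within_restrict _ (lo B - k) (hi B - k)); try (unfold k, LB; lra).
    apply cont_within_shift, (tp_cont _ _ _ GB); unfold k, LA, LB in *; lra.
Qed.

Lemma concat_turning_piece : turning_piece c (concat c A B) (concat_angle A B al be).
Proof.
  pose proof (tp_le _ _ _ GA); pose proof (tp_le _ _ _ GB).
  assert (LA0 : 0 <= LA) by (unfold LA; lra); assert (LB0 : 0 <= LB) by (unfold LB; lra).
  constructor; change (lo (concat c A B)) with 0; change (hi (concat c A B)) with (LA + LB);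
    try lra.
  - intros s Hs; destruct (Rle_dec s LA).
    + rewrite concat_tang_l, (tp_tang _ _ _ GA), concat_angle_l by (unfold LA in *; lra); auto.
    + rewrite concat_tang_r, (tp_tang _ _ _ GB), rotate_polar, concat_angle_r
        by (unfold LA, LB in *; lra).
      unfold dl; set (b := be (s - LA + lo B)).
      replace (b + al (hi A) - be (lo B)) with (b + (al (hi A) - be (lo B))) by ring; auto.
  - intros s Hs; split; eapply (deriv_within_glue _ _ _ _ 0 LA); try (intros; reflexivity); try lra;
      intros Hs';
      [apply (proj1 (concat_deriv_l s ltac:(lra))) | apply (proj1 (concat_deriv_r s ltac:(lra)))
      |apply (proj2 (concat_deriv_l s ltac:(lra))) | apply (proj2 (concat_deriv_r s ltac:(lra)))].
  - apply concat_angle_cont.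
Qed.

Lemma concat_pos_0 : pos (concat c A B) 0 = pos A (lo A).
Proof. pose proof (tp_le _ _ _ GA); rewrite concat_pos_l by (unfold LA; lra); f_equal; ring. Qed.

Lemma concat_pos_end : pos (concat c A B) (LA + LB) =
  vadd (pos A (hi A)) (rotate dl (vsub (pos B (hi B)) (pos B (lo B)))).
Proof.
  pose proof (tp_le _ _ _ GB); rewrite concat_pos_r by (unfold LB; lra).
  replace (LA + LB - LA + lo B) with (hi B) by (unfold LB; ring); auto.
Qed.

Lemma concat_angle_0 : concat_angle A B al be 0 = al (lo A).
Proof. pose proof (tp_le _ _ _ GA); rewrite concat_angle_l by (unfold LA; lra); f_equal; ring. Qed.

Lemma concat_angle_end : concat_angle A B al be (LA + LB) = be (hi B) + al (hi A) - be (lo B).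
Proof.
  pose proof (tp_le _ _ _ GB); rewrite concat_angle_r by (unfold LB; lra).
  replace (LA + LB - LA + lo B) with (hi B) by (unfold LB; ring); auto.
Qed.

End Concat.

(** * The rearranged curve *)

Lemma turning_piece_C1_on01 c A al : turning_piece c A al -> lo A = 0 -> hi A = 1 ->
  deriv_on01 (pos A) (tang A) /\ cont2_on01 (tang A).
Proof.
  destruct A as [p t l h]; simpl; intros G -> ->; split.
  - intros s Hs; destruct (tp_deriv _ _ _ G s Hs) as [D1 D2].
    split; apply D_in_of_deriv_within; auto.
  - split; intros s Hs; apply continue_in_of_cont_within;
      destruct (cont_within_polar al c 0 1 s (tp_cont _ _ _ G s Hs)) as [K1 K2];
      [revert K1 | revert K2]; apply cont_within_ext; auto; intros x Hx;
      rewrite (tp_tang _ _ _ G); auto.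
Qed.

Lemma cos_sin_2PI_mult (m : Z) : cos (2 * PI * IZR m) = 1 /\ sin (2 * PI * IZR m) = 0.
Proof.
  assert (S0 : sin (IZR m * PI) = 0) by (apply sin_eq_0_1; exists m; auto).
  replace (2 * PI * IZR m) with (2 * (IZR m * PI)) by ring.
  rewrite cos_2a_sin, sin_2a, S0; split; ring.
Qed.

Lemma cont_on01_comp f h : cont_on01 f -> continuity h -> cont_on01 (fun t => h (f t)).
Proof.
  intros Hf Hh s Hs; apply continue_in_of_cont_within, cont_within_comp; auto.
  apply cont_within_of_continue_in, Hf; auto.
Qed.

Lemma cont_on01_of_D_in f df : (forall s, I01 s -> D_in f df I01 s) -> cont_on01 f.
Proof.
  intros H s Hs; apply continue_in_of_cont_within.
  apply (deriv_within_cont _ (df s)), deriv_within_of_D_in, H, Hs.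
Qed.

Section Rearranged.

Variables (gam dgam : R -> pt2) (c : R) (theta : R -> R).
Hypothesis Hc : 0 < c.
Hypothesis Hd : deriv_on01 gam dgam.
Hypothesis Hth : cont_on01 theta.
Hypothesis Hdg : forall s, I01 s -> dgam s = (c * cos (theta s), c * sin (theta s)).

Definition rearranged_end (c1 c2 : R) : pt2 :=
  vadd (vadd (gam c1) (rotate (theta c1 - theta c2) (vsub (gam 1) (gam c2))))
       (rotate (theta 1 - theta c2) (vsub (gam c2) (gam c1))).

Definition rearranged_piece (c1 c2 : R) : piece :=
  concat c (concat c (Piece gam dgam 0 c1) (Piece gam dgam c2 1)) (Piece gam dgam c1 c2).

Definition rearranged_angle (c1 c2 : R) : R -> R :=
  concat_angle (concat c (Piece gam dgam 0 c1) (Piece gam dgam c2 1)) (Piece gam dgam c1 c2)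
    (concat_angle (Piece gam dgam 0 c1) (Piece gam dgam c2 1) theta theta) theta.

Lemma gamma_piece a b : 0 <= a <= b -> b <= 1 -> turning_piece c (Piece gam dgam a b) theta.
Proof.
  intros Ha Hb; constructor; simpl; try lra.
  - intros s Hs; apply Hdg; unfold I01; lra.
  - intros s Hs; destruct (Hd s ltac:(unfold I01; lra)) as [D1 D2].
    apply deriv_within_of_D_in in D1, D2.
    split; apply (deriv_within_restrict _ _ 0 1); auto; lra.
  - intros s Hs; apply (cont_within_restrict _ 0 1); try lra.
    apply cont_within_of_continue_in, Hth; unfold I01; lra.
Qed.

Section Cuts.

Variables c1 c2 : R.
Hypothesis Hc1 : 0 <= c1 <= c2.
Hypothesis Hc2 : c2 <= 1.

Let g1 := Piece gam dgam 0 c1.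
Let g2 := Piece gam dgam c1 c2.
Let g3 := Piece gam dgam c2 1.

Let G1 : turning_piece c g1 theta. Proof. apply gamma_piece; lra. Qed.
Let G2 : turning_piece c g2 theta. Proof. apply gamma_piece; lra. Qed.
Let G3 : turning_piece c g3 theta. Proof. apply gamma_piece; lra. Qed.
Let G13 : turning_piece c (concat c g1 g3) (concat_angle g1 g3 theta theta).
Proof. apply concat_turning_piece; auto. Qed.

Lemma rearranged_piece_turning : turning_piece c (rearranged_piece c1 c2) (rearranged_angle c1 c2).
Proof. apply concat_turning_piece; auto. Qed.

Lemma rearranged_piece_hi : hi (rearranged_piece c1 c2) = 1.
Proof. simpl; ring. Qed.

Lemma rearranged_angle_0 : rearranged_angle c1 c2 0 = theta 0.
Proof.
  change (rearranged_angle c1 c2) with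
    (concat_angle (concat c g1 g3) g2 (concat_angle g1 g3 theta theta) theta).
  rewrite (concat_angle_0 c _ _ _ _ G13); simpl.
  apply (concat_angle_0 c g1 g3 _ _ G1).
Qed.

Lemma rearranged_angle_1 : rearranged_angle c1 c2 1 = theta 1.
Proof.
  change (rearranged_angle c1 c2) with
    (concat_angle (concat c g1 g3) g2 (concat_angle g1 g3 theta theta) theta).
  replace 1 with ((hi (concat c g1 g3) - lo (concat c g1 g3)) + (hi g2 - lo g2)) at 1
    by (simpl; ring).
  rewrite (concat_angle_end c _ _ _ _ G2).
  replace (hi (concat c g1 g3)) with ((hi g1 - lo g1) + (hi g3 - lo g3)) by reflexivity.
  rewrite (concat_angle_end c g1 g3 _ _ G3); simpl; ring.
Qed.

Lemma rearranged_0 : rearranged c gam dgam c1 c2 0 = gam 0.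
Proof.
  change (rearranged c gam dgam c1 c2) with (pos (concat c (concat c g1 g3) g2)).
  rewrite (concat_pos_0 c _ _ _ G13); simpl.
  apply (concat_pos_0 c g1 g3 _ G1).
Qed.

Lemma rearranged_1 : rearranged c gam dgam c1 c2 1 = rearranged_end c1 c2.
Proof.
  change (rearranged c gam dgam c1 c2) with (pos (concat c (concat c g1 g3) g2)).
  replace 1 with ((hi (concat c g1 g3) - lo (concat c g1 g3)) + (hi g2 - lo g2)) at 1
    by (simpl; ring).
  rewrite (concat_pos_end c _ _ _ _ Hc G13 G2).
  replace (hi (concat c g1 g3)) with ((hi g1 - lo g1) + (hi g3 - lo g3)) at 1 by reflexivity.
  rewrite (concat_pos_end c g1 g3 _ _ Hc G1 G3).
  replace (hi g1 - lo g1 + (hi g3 - lo g3)) with (hi (concat c g1 g3)) by reflexivity.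
  rewrite (concat_angle_end c g1 g3 _ _ G3); simpl; unfold rearranged_end.
  replace (theta 1 + theta c1 - theta c2 - theta c1) with (theta 1 - theta c2) by ring; auto.
Qed.

Lemma rearranged_C1_periodic (m : Z) : theta 1 - theta 0 = 2 * PI * IZR m ->
  exists dr : R -> pt2,
    deriv_on01 (rearranged c gam dgam c1 c2) dr /\ cont2_on01 dr /\ dr 0 = dr 1.
Proof.
  intros Hm; pose proof rearranged_piece_turning as G.
  destruct (turning_piece_C1_on01 _ _ _ G) as [D C]; [reflexivity | apply rearranged_piece_hi |].
  exists (tang (rearranged_piece c1 c2)); split; [exact D | split; [exact C |]].
  rewrite !(tp_tang _ _ _ G) by (rewrite rearranged_piece_hi; simpl; lra).
  rewrite rearranged_angle_0, rearranged_angle_1.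
  replace (theta 1) with (theta 0 + 2 * PI * IZR m) by lra.
  destruct (cos_sin_2PI_mult m) as [P1 P2]; rewrite cos_plus, sin_plus, P1, P2; f_equal; ring.
Qed.

End Cuts.

Variable m : Z.
Hypothesis Hm : theta 1 - theta 0 = 2 * PI * IZR m.

Definition closing_homotopy (x y : R) : pt2 :=
  rotate (theta y - theta 1) (vsub (rearranged_end (x * y) y) (gam 0)).

Lemma rotate_theta_0_1 p : rotate (theta 0 - theta 1) p = p.
Proof.
  destruct (cos_sin_2PI_mult m) as [P1 P2].
  replace (theta 0 - theta 1) with (- (2 * PI * IZR m)) by lra.
  apply rotate_period; [rewrite cos_neg | rewrite sin_neg, P2]; lra.
Qed.

Lemma closing_homotopy_left y : closing_homotopy 0 y = vsub (gam 1) (gam 0).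
Proof.
  unfold closing_homotopy, rearranged_end; rewrite Rmult_0_l.
  replace (vsub (vadd (vadd (gam 0) (rotate (theta 0 - theta y) (vsub (gam 1) (gam y))))
                      (rotate (theta 1 - theta y) (vsub (gam y) (gam 0)))) (gam 0))
    with (vadd (rotate (theta 0 - theta y) (vsub (gam 1) (gam y)))
               (rotate (theta 1 - theta y) (vsub (gam y) (gam 0))))
    by (unfold vadd, vsub; simpl; f_equal; ring).
  rewrite rotate_vadd, !rotate_rotate.
  replace (theta y - theta 1 + (theta 0 - theta y)) with (theta 0 - theta 1) by ring.
  replace (theta y - theta 1 + (theta 1 - theta y)) with (theta 1 - theta 1) by ring.
  rewrite rotate_theta_0_1, rotate_zero_angle; unfold vadd, vsub; simpl; f_equal; ring.
Qed.

Lemma closing_homotopy_top x : closing_homotopy x 1 = vsub (gam 1) (gam 0).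
Proof.
  unfold closing_homotopy, rearranged_end; rewrite Rmult_1_r, !rotate_zero_angle.
  unfold vadd, vsub; simpl; f_equal; ring.
Qed.

Lemma closing_homotopy_right y :
  closing_homotopy 1 y = rotate (theta y - theta 1) (vsub (gam 1) (gam 0)).
Proof.
  unfold closing_homotopy, rearranged_end; rewrite Rmult_1_l, rotate_zero_angle; f_equal.
  replace (vsub (gam y) (gam y)) with (0, 0) by (unfold vsub; f_equal; ring).
  rewrite rotate_origin; unfold vadd, vsub; simpl; f_equal; ring.
Qed.

Lemma closing_homotopy_ucont : ucont_sq_vec closing_homotopy.
Proof.
  assert (Ug1 : ucont01 (fun t => fst (gam t)))
    by (apply ucont01_of_cont, (cont_on01_of_D_in _ (fun t => fst (dgam t))); apply Hd).
  assert (Ug2 : ucont01 (fun t => snd (gam t)))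
    by (apply ucont01_of_cont, (cont_on01_of_D_in _ (fun t => snd (dgam t))); apply Hd).
  assert (Uc : ucont01 (fun t => cos (theta t)))
    by (apply ucont01_of_cont, cont_on01_comp; [exact Hth | apply continuity_cos]).
  assert (Us : ucont01 (fun t => sin (theta t)))
    by (apply ucont01_of_cont, cont_on01_comp; [exact Hth | apply continuity_sin]).
  assert (Gxy : ucont_sq_vec (fun x y => gam (x * y)))
    by (split; apply (ucont_sq_of_mult (fun t => _ (gam t))); auto).
  assert (Gy : ucont_sq_vec (fun _ y => gam y))
    by (split; apply (ucont_sq_of_snd (fun t => _ (gam t))); auto).
  assert (Txy : ucont_sq_angle (fun x y => theta (x * y)))
    by (split; apply (ucont_sq_of_mult (fun t => _ (theta t))); auto).
  assert (Ty : ucont_sq_angle (fun _ y => theta y))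
    by (split; apply (ucont_sq_of_snd (fun t => _ (theta t))); auto).
  unfold closing_homotopy, rearranged_end.
  apply ucont_sq_vec_rotate; [apply ucont_sq_angle_minus; auto; apply ucont_sq_angle_const|].
  apply ucont_sq_vec_vsub; [|apply ucont_sq_vec_const].
  apply ucont_sq_vec_vadd; [apply ucont_sq_vec_vadd; [auto|] |];
    apply ucont_sq_vec_rotate; try apply ucont_sq_angle_minus; try apply ucont_sq_vec_vsub;
    auto; try apply ucont_sq_angle_const; apply ucont_sq_vec_const.
Qed.

Lemma exists_closing_cuts : m <> 0%Z ->
  exists c1 c2, 0 <= c1 <= c2 /\ c2 <= 1 /\ rearranged_end c1 c2 = gam 0.
Proof.
  intros Hm0; apply NNPP; intros NE; apply Hm0.
  assert (Hturn : theta 1 - theta 1 = theta 0 - theta 1).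
  { apply (boundary_turning_trivial closing_homotopy (fun t => theta t - theta 1)).
    - apply closing_homotopy_ucont.
    - apply ucont01_of_cont, (cont_on01_comp theta (fun z => z - theta 1)); auto; reg.
    - intros x y Hx Hy E; apply NE; exists (x * y), y; split; [split; nra | split; [lra |]].
      apply rotate_eq_origin, vsub_eq_origin in E; exact E.
    - intros x Hx; unfold closing_homotopy; rewrite !Rmult_0_r; reflexivity.
    - intros y Hy; rewrite !closing_homotopy_left; reflexivity.
    - intros x Hx; rewrite closing_homotopy_top, closing_homotopy_left; reflexivity.
    - intros y Hy; rewrite closing_homotopy_right, closing_homotopy_left; reflexivity. }
  apply eq_IZR_R0; pose proof PI_RGT_0; nra.
Qed.

End Rearranged.

Theorem theorem3p1 (gam dgam : R -> pt2) (c : R) (theta : R -> R) (m : Z) :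
  0 < c ->
  (* gamma is C^1 on [0,1] with derivative dgam *)
  deriv_on01 gam dgam ->
  cont2_on01 dgam ->
  (* constant speed c *)
  (forall s, I01 s -> norm2 (dgam s) = c) ->
  (* theta is a turning angle function for gamma *)
  cont_on01 theta ->
  (forall s, I01 s -> dgam s = (c * cos (theta s), c * sin (theta s))) ->
  theta 1 - theta 0 = 2 * PI * IZR m ->
  m <> 0%Z ->
  exists c1 c2 : R,
    0 <= c1 <= c2 /\ c2 <= 1 /\
    rearranged c gam dgam c1 c2 0 = rearranged c gam dgam c1 c2 1 /\
    exists dr : R -> pt2,
      deriv_on01 (rearranged c gam dgam c1 c2) dr /\
      cont2_on01 dr /\
      dr 0 = dr 1.
Proof.
  (* Continuity and speed of [dgam] are already encoded in the turning angle. *)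
  intros Hc Hd _ _ Hth Hdg Hm Hm0.
  destruct (exists_closing_cuts gam dgam theta Hd Hth m Hm Hm0) as [c1 [c2 [Hc1 [Hc2 Hend]]]].
  exists c1, c2; split; [exact Hc1 | split; [exact Hc2 | split]].
  - rewrite (rearranged_0 _ _ _ theta), (rearranged_1 _ _ _ theta), Hend by assumption; reflexivity.
  - apply (rearranged_C1_periodic gam dgam c theta) with (m := m); assumption.
Qed.
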